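(* Let $u\in(0,\frac12)$ and let $\{p_i\}_{i\in\mathcal{I}}$ be a finite nonempty family with $p_i\in[u,\frac12]$ for all $i\in\mathcal{I}$. Then $$\frac{\sqrt{\sum_{i\in\mathcal{I}}p_i^3(1-p_i)}}{\sum_{i\in\mathcal{I}}p_i(1-p_i)}\le\frac{1+2u+4u^2-8u^3}{\sqrt{16|\mathcal{I}|\,u\,(1-u-4u^2+4u^3)}}.$$ *)

(* the inequality is purely algebraic (uses only square roots),
   so it is stated over an arbitrary real closed field R (which includes the reals). *)
From HB Require Import structures.
From mathcomp Require Import all_boot all_order all_algebra.
Set Implicit Arguments. Unset Strict Implicit. Unset Printing Implicit Defensive.

From HB Require Import structures.
From mathcomp Require Import all_boot all_order all_algebra.
From mathcomp Require Import ring lra.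
Import Order.TTheory GRing.Theory Num.Theory.

(* Write C(u) = 1 + 2u + 4u^2 - 8u^3, m(u) = u(1-u)(1+2u), S = sum p_i(1-p_i)
   and T = sum p_i^3(1-p_i), n = |I|.  The proof has three steps.
   1. A pointwise polynomial bound: for u <= p <= 1/2,
        4(1-2u) p^3(1-p) <= C(u) p(1-p) - m(u),
      because the difference factors as (p-u)(1-2p)(1 + (1-2u)(1-2p)(p+u)),
      a product of nonnegative terms.  Summing over I gives
        4(1-2u) T <= C S - n m.
   2. The denominator of the claim factors as 16 n u (1-u-4u^2+4u^3)
      = 4 (n m) * 4(1-2u), so by step 1 and the inequality 4y(x-y) <= x^2
      (with x = C S, y = n m) we get T * D <= (C S)^2.
   3. For positive b, d and nonnegative a, c, the inequality a d <= (c b)^2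
      is equivalent to sqrt a / b <= c / sqrt d; with a = T, b = S, c = C
      and d = D this is the claim. *)

Local Open Scope ring_scope.

Section PolynomialBounds.
Context {R : realFieldType}.
Implicit Types (u p x y : R).

Lemma pointwise_gap_factor u p :
  (1 + 2 * u + 4 * u ^+ 2 - 8 * u ^+ 3) * (p * (1 - p)) - u * (1 - u) * (1 + 2 * u)
    - 4 * (1 - 2 * u) * (p ^+ 3 * (1 - p))
  = (p - u) * (1 - 2 * p) * (1 + (1 - 2 * u) * (1 - 2 * p) * (p + u)).
Proof. ring. Qed.

Lemma pointwise_bound u p : 0 < u -> u <= p <= 1 / 2 ->
  4 * (1 - 2 * u) * (p ^+ 3 * (1 - p))
  <= (1 + 2 * u + 4 * u ^+ 2 - 8 * u ^+ 3) * (p * (1 - p)) - u * (1 - u) * (1 + 2 * u).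
Proof.
move=> u_gt0 /andP[u_le_p p_le_half].
rewrite -subr_ge0 pointwise_gap_factor.
have tail_ge0 : 0 <= (1 - 2 * u) * (1 - 2 * p) * (p + u).
  by apply: mulr_ge0; [apply: mulr_ge0|]; lra.
by apply: mulr_ge0; [apply: mulr_ge0|]; lra.
Qed.

Lemma summed_bound (I : finType) (p : I -> R) u : 0 < u ->
  (forall i, u <= p i <= 1 / 2) ->
  4 * (1 - 2 * u) * (\sum_i p i ^+ 3 * (1 - p i))
  <= (1 + 2 * u + 4 * u ^+ 2 - 8 * u ^+ 3) * (\sum_i p i * (1 - p i))
     - #|I|%:R * (u * (1 - u) * (1 + 2 * u)).
Proof.
move=> u_gt0 hp.
set C := 1 + 2 * u + 4 * u ^+ 2 - 8 * u ^+ 3; set m := u * (1 - u) * (1 + 2 * u).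
apply: (@le_trans _ _ (\sum_i (C * (p i * (1 - p i)) - m))).
  by rewrite mulr_sumr; apply: ler_sum => i _; exact: pointwise_bound.
by rewrite sumrB -mulr_sumr sumr_const mulr_natl.
Qed.

Lemma four_mul_sub_le_sqr x y : 4 * y * (x - y) <= x ^+ 2.
Proof.
rewrite -subr_ge0.
have -> : x ^+ 2 - 4 * y * (x - y) = (x - 2 * y) ^+ 2 by ring.
exact: sqr_ge0.
Qed.

Lemma denominator_factor (n u : R) :
  16 * n * u * (1 - u - 4 * u ^+ 2 + 4 * u ^+ 3)
  = 4 * (n * (u * (1 - u) * (1 + 2 * u))) * (4 * (1 - 2 * u)).
Proof. ring. Qed.

Lemma leading_coef_gt0 u : 0 < u -> u < 1 / 2 ->
  0 < 1 + 2 * u + 4 * u ^+ 2 - 8 * u ^+ 3.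
Proof. by move=> u_gt0 u_lt_half; nra. Qed.

End PolynomialBounds.

Lemma sqrt_div_le_div_sqrt (R : rcfType) (a b c d : R) :
  0 <= a -> 0 < b -> 0 <= c -> 0 < d -> a * d <= (c * b) ^+ 2 ->
  Num.sqrt a / b <= c / Num.sqrt d.
Proof.
move=> a_ge0 b_gt0 c_ge0 d_gt0 le_sq.
rewrite ler_pdivrMr // mulrAC ler_pdivlMr ?sqrtr_gt0 // -sqrtrM //.
rewrite -[c * b]ger0_norm; last by rewrite mulr_ge0 // ltW.
by rewrite -sqrtr_sqr; apply: ler_wsqrtr.
Qed.

Theorem mainTheorem14 (R : rcfType) (I : finType) (p : I -> R) (u : R)
  (hu0 : 0 < u) (hu1 : u < 1 / 2) (hI : (0 < #|I|)%N)
  (hp : forall i, u <= p i <= 1 / 2) :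
  Num.sqrt (\sum_(i : I) p i ^+ 3 * (1 - p i)) / (\sum_(i : I) p i * (1 - p i))
  <= (1 + 2 * u + 4 * u ^+ 2 - 8 * u ^+ 3)
     / Num.sqrt (16 * (#|I|)%:R * u * (1 - u - 4 * u ^+ 2 + 4 * u ^+ 3)).
Proof.
set C := 1 + 2 * u + 4 * u ^+ 2 - 8 * u ^+ 3.
set n : R := #|I|%:R.
set S := \sum_i p i * (1 - p i).
set T := \sum_i p i ^+ 3 * (1 - p i).
set m := u * (1 - u) * (1 + 2 * u).
have n_gt0 : 0 < n by rewrite ltr0n.
have nm_gt0 : 0 < n * m.
  by apply: mulr_gt0 => //; apply: mulr_gt0; [apply: mulr_gt0|]; lra.
have T_ge0 : 0 <= T.
  by apply: sumr_ge0 => i _; have /andP[lo hi] := hp i;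
     apply: mulr_ge0; [apply: exprn_ge0|]; lra.
have sum_le := summed_bound I p u hu0 hp; rewrite -/C -/S -/T -/n -/m in sum_le.
have C_gt0 : 0 < C by exact: leading_coef_gt0.
have S_gt0 : 0 < S.
  rewrite -(pmulr_rgt0 _ C_gt0).
  have : 0 <= 4 * (1 - 2 * u) * T by apply: mulr_ge0 => //; lra.
  lra.
apply: sqrt_div_le_div_sqrt => //; first exact: ltW.
  rewrite denominator_factor; apply: mulr_gt0; last lra.
  by apply: mulr_gt0 => //; lra.
rewrite denominator_factor -/m [T * _]mulrC -[_ * _ * T]mulrA.
apply: le_trans (four_mul_sub_le_sqr (C * S) (n * m)).
by apply: (ler_wpM2l _ sum_le); lra.
Qed.
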